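(* Let $\mathcal C\subseteq\{0,1\}^K$ be a nonempty binary CW code of length $K$ and weight $\omega$ (not necessarily full). Then for every observation vector $\mathbf r\in\mathbb Z_{\ge0}^K$, every CSI $(\bar c_{\mathrm s},\bar c_{\mathrm n})\in(0,\infty)^2$ and every probability density $f_{\bar{\mathbf c}}$ on $(0,\infty)^2$, the set of coherent ML solutions $\arg\max_{\mathbf s\in\mathcal C} f_{\mathbf r}(\mathbf r\mid\bar{\mathbf c},\mathbf s)$ and the set of non-coherent ML solutions $\arg\max_{\mathbf s\in\mathcal C}\int\!\!\int f_{\mathbf r}(\mathbf r\mid\bar{\mathbf c},\mathbf s)f_{\bar{\mathbf c}}(\bar c_{\mathrm s},\bar c_{\mathrm n})\,\mathrm d\bar c_{\mathrm s}\,\mathrm d\bar c_{\mathrm n}$ are both equal to $\arg\max_{\mathbf s\in\mathcal C}\sum_{k=1}^K s[k]\,r[k]$; in particular they require neither instantaneous nor statistical CSI.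
   Context: Channel model: given CSI $\bar{\mathbf c}=(\bar c_{\mathrm s},\bar c_{\mathrm n})$ with $\bar c_{\mathrm s},\bar c_{\mathrm n}>0$ and a transmitted codeword $\mathbf s=[s[1],\dots,s[K]]^{\mathsf T}$, the observations $r[1],\dots,r[K]$ are independent with $r[k]$ Poisson of mean $s[k]\bar c_{\mathrm s}+\bar c_{\mathrm n}$, so $f_{\mathbf r}(\mathbf r\mid\bar{\mathbf c},\mathbf s)=\prod_{k=1}^K \frac{(\bar c_{\mathrm s}s[k]+\bar c_{\mathrm n})^{r[k]}e^{-\bar c_{\mathrm s}s[k]-\bar c_{\mathrm n}}}{r[k]!}$. A binary CW code of length $K$ and weight $\omega$ is a codebook $\mathcal C\subseteq\{0,1\}^K$ in which every codeword has exactly $\omega$ entries equal to $1$. *)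

From HB Require Import structures.
From mathcomp Require Import all_boot all_order all_algebra.
From mathcomp Require Import all_classical all_reals all_analysis.
Set Implicit Arguments. Unset Strict Implicit. Unset Printing Implicit Defensive.
Import Order.TTheory GRing.Theory Num.Theory.
Local Open Scope ring_scope.

(* A codeword s in {0,1}^K is a finite function 'I_K -> bool; s[k] as a real
   number is (s k)%:R. An observation vector r is a function 'I_K -> nat. *)
Definition codeword (K : nat) := {ffun 'I_K -> bool}.

Definition is_CW_code (K w : nat) (C : {set codeword K}) : Prop :=
  forall s, s \in C -> #|[set k | s k]| = w.

Definition lik (R : realType) (K : nat) (cs cn : R) (s : codeword K)
  (r : 'I_K -> nat) : R :=
  \prod_(k < K) ((cs * (s k)%:R + cn) ^+ (r k) * expR (- (cs * (s k)%:R) - cn)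
                 / ((r k)`!)%:R).

Definition argmax (T : finType) (d : Order.disp_t) (U : porderType d)
  (C : {set T}) (g : T -> U) : {set T} :=
  [set s in C | [forall s' in C, (g s' <= g s)%O]].

Definition pos_quadrant (R : realType) : set (R * R) :=
  [set x | 0 < x.1 /\ 0 < x.2].
Arguments pos_quadrant R : clear implicits.

Definition is_density (R : realType) (f : R * R -> R) : Prop :=
  [/\ measurable_fun (pos_quadrant R) f,
      (forall x, pos_quadrant R x -> 0 <= f x) &
      (\int[((@lebesgue_measure R) \x (@lebesgue_measure R))%E]_(x in pos_quadrant R)
          (f x)%:E = 1)%E].

Definition avg_lik (R : realType) (K : nat) (f : R * R -> R) (s : codeword K)
  (r : 'I_K -> nat) : \bar R :=
  (\int[((@lebesgue_measure R) \x (@lebesgue_measure R))%E]_(x in pos_quadrant R)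
      (lik x.1 x.2 s r * f x)%:E)%E.

Definition corr (R : realType) (K : nat) (s : codeword K) (r : 'I_K -> nat) : R :=
  \sum_(k < K) (s k)%:R * (r k)%:R.

From HB Require Import structures.
From mathcomp Require Import all_boot all_order all_algebra.
From mathcomp Require Import all_classical all_reals all_analysis.
From mathcomp Require Import measurable_realfun ring.
Import Order.TTheory GRing.Theory Num.Theory.
Set Implicit Arguments. Unset Strict Implicit. Unset Printing Implicit Defensive.
Local Open Scope ring_scope.

(* Every codeword of a CW code has weight w, so the Poisson likelihood factors as
     lik cs cn s r = (prod_k Poisson_cn (r k)) * e^(-w cs) * (1 + cs / cn)^<s, r>,
   a strictly increasing function of the correlation <s, r> whenever cs, cn > 0:
   coherent ML detection is correlation decoding.  Averaging over a density keeps
   the order, and keeps it strict because a density is not a.e. zero, the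
   likelihood is positive, and the averages are finite since the likelihood is
   at most 1. *)

Lemma eq_argmax (T : finType) d (U : porderType d) d' (V : porderType d')
    (C : {set T}) (g : T -> U) (h : T -> V) :
  {in C &, forall s s', (g s' <= g s)%O = (h s' <= h s)%O} ->
  argmax C g = argmax C h.
Proof.
move=> gh; apply/setP => s; rewrite !inE; have [sC|//] := boolP (s \in C).
by apply: eq_forallb_in => s' s'C; rewrite gh.
Qed.

Lemma argmax_homo (T : finType) d (U : porderType d) d' (V : orderType d')
    (C : {set T}) (g : T -> U) (h : T -> V) :
  {in C &, forall s s', (h s' <= h s)%O -> (g s' <= g s)%O} ->
  {in C &, forall s s', (h s' < h s)%O -> (g s' < g s)%O} ->
  argmax C g = argmax C h.
Proof.
move=> le_gh lt_gh; apply: eq_argmax => s s' sC s'C.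
have [/(le_gh _ _ sC s'C)->//|/(lt_gh _ _ s'C sC)] := leP (h s') (h s).
exact: lt_geF.
Qed.

Section poisson_pmf.
Variable R : realType.
Implicit Types (a b rate : R) (n : nat).

Lemma poisson_pmf_gt0 rate n : 0 < rate -> 0 < poisson_pmf rate n.
Proof.
move=> rate_gt0; rewrite /poisson_pmf rate_gt0.
by rewrite !mulr_gt0 ?exprn_gt0 ?invr_gt0 ?ltr0n ?fact_gt0 ?expR_gt0.
Qed.

Lemma poisson_pmf_le1 rate n : poisson_pmf rate n <= 1.
Proof.
rewrite /poisson_pmf; case: ifPn => // rate_gt0.
have pow_le_exp : rate ^+ n / n`!%:R <= expR rate.
  case: n => [|n]; first by rewrite expr0 fact0 divr1 -expR0 ler_expR; exact: ltW.
  by apply: le_trans (expR_ge1Dxn n (ltW rate_gt0)); rewrite lerDr.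
by rewrite expRN ler_pdivrMr ?expR_gt0 // mul1r.
Qed.

Lemma poisson_pmfD a b n : 0 <= a -> 0 < b ->
  poisson_pmf (a + b) n = poisson_pmf b n * (expR (- a) * ((a + b) / b) ^+ n).
Proof.
move=> a_ge0 b_gt0; rewrite /poisson_pmf b_gt0 ltr_wpDl //.
rewrite opprD expRD exprMn exprVn; field.
by rewrite expf_neq0 // gt_eqF.
Qed.

End poisson_pmf.

Definition corrn (K : nat) (s : codeword K) (r : 'I_K -> nat) : nat :=
  (\sum_(k < K | s k) r k)%N.

Section likelihood.
Variables (R : realType) (K : nat).
Implicit Types (s : codeword K) (r : 'I_K -> nat) (cs cn : R).

Lemma corrE s r : corr R s r = (corrn s r)%:R.
Proof.
rewrite /corr /corrn natr_sum [RHS]big_mkcond /=; apply: eq_bigr => k _.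
by case: (s k); rewrite ?mul1r ?mul0r.
Qed.

Lemma lik_poisson s r cs cn : 0 <= cs -> 0 < cn ->
  lik cs cn s r = \prod_(k < K) poisson_pmf (cs * (s k)%:R + cn) (r k).
Proof.
move=> cs_ge0 cn_gt0; apply: eq_bigr => k _.
by rewrite /poisson_pmf ltr_wpDl ?mulr_ge0 // opprD mulrAC.
Qed.

Lemma lik_factor s r cs cn : 0 <= cs -> 0 < cn ->
  lik cs cn s r = (\prod_(k < K) poisson_pmf cn (r k)) *
    (expR (- cs) ^+ #|[set k | s k]| * ((cs + cn) / cn) ^+ corrn s r).
Proof.
move=> cs_ge0 cn_gt0.
have -> : expR (- cs) ^+ #|[set k | s k]| * ((cs + cn) / cn) ^+ corrn s r =
    \prod_(k < K | s k) (expR (- cs) * ((cs + cn) / cn) ^+ r k).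
  by rewrite big_split /= prodr_const prodrXr -/(corrn s r) cardsE.
rewrite lik_poisson // [X in _ * X]big_mkcond -big_split /=; apply: eq_bigr => k _.
by case: (s k); rewrite ?mulr1 ?mulr0 ?add0r // poisson_pmfD.
Qed.

Lemma lik_gt0 s r cs cn : 0 <= cs -> 0 < cn -> 0 < lik cs cn s r.
Proof.
move=> cs_ge0 cn_gt0; rewrite lik_poisson //; apply: prodr_gt0 => k _.
by rewrite poisson_pmf_gt0 // ltr_wpDl ?mulr_ge0.
Qed.

Lemma lik_le1 s r cs cn : 0 <= cs -> 0 < cn -> lik cs cn s r <= 1.
Proof.
move=> cs_ge0 cn_gt0; rewrite lik_poisson //; apply: prodr_ile1 => k _.
by rewrite poisson_pmf_ge0 poisson_pmf_le1.
Qed.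

Lemma ler_lik s s' r cs cn : 0 < cs -> 0 < cn ->
    #|[set k | s' k]| = #|[set k | s k]| ->
  (lik cs cn s' r <= lik cs cn s r) = (corr R s' r <= corr R s r).
Proof.
move=> cs_gt0 cn_gt0 same_weight.
rewrite !lik_factor ?(ltW cs_gt0) // same_weight !mulrA !corrE ler_nat ler_pM2l.
  by apply: ler_eXn2l; rewrite ltr_pdivlMr // mul1r ltrDr.
apply: mulr_gt0; last exact/exprn_gt0/expR_gt0.
by apply: prodr_gt0 => k _; apply: poisson_pmf_gt0.
Qed.

Lemma ltr_lik s s' r cs cn : 0 < cs -> 0 < cn ->
    #|[set k | s' k]| = #|[set k | s k]| ->
  (lik cs cn s' r < lik cs cn s r) = (corr R s' r < corr R s r).
Proof. by move=> cs_gt0 cn_gt0 same_weight; rewrite !ltNge ler_lik. Qed.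

Lemma measurable_lik s r : measurable_fun setT (fun x : R * R => lik x.1 x.2 s r).
Proof.
apply: measurable_prod => k _; apply: measurable_funM => //.
apply: measurable_funM.
  by apply/measurable_funX/measurable_funD => //; apply: measurable_funM.
apply: measurableT_comp => //; apply: measurable_funB => //.
exact/measurable_funN/measurable_funM.
Qed.

End likelihood.

Section weighted_integral.
Local Open Scope classical_set_scope.
Context d (T : measurableType d) (R : realType) (mu : {measure set T -> \bar R}).
Variables (D : set T) (f : T -> R).
Hypotheses (mD : measurable D) (mf : measurable_fun D f).
Hypothesis f_ge0 : forall x, D x -> 0 <= f x.

Lemma integral_pos_weight_eq0 (k : T -> R) : measurable_fun D k ->
    (forall x, D x -> 0 < k x) ->
  (\int[mu]_(x in D) (k x * f x)%:E = 0)%E -> (\int[mu]_(x in D) (f x)%:E = 0)%E.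
Proof.
move=> mk k_gt0 kf0.
have mkf : measurable_fun D (fun x => (k x * f x)%:E).
  exact/measurable_EFinP/measurable_funM.
have kf_abs0 : (\int[mu]_(x in D) `|(k x * f x)%:E| = 0)%E.
  rewrite -kf0; apply: eq_integral => x; rewrite inE => Dx.
  by rewrite gee0_abs // lee_fin (mulr_ge0 (ltW (k_gt0 x Dx)) (f_ge0 Dx)).
have kf_ae0 := (ae_eq_integral_abs mu mD mkf).1 kf_abs0.
have f_ae0 : ae_eq mu D (fun x => (f x)%:E) (cst 0%E).
  apply: filterS kf_ae0 => x kf0x Dx; move: (kf0x Dx) => /= /eqP.
  by rewrite eqe mulf_eq0 gt_eqF ?k_gt0 //= => /eqP->.
rewrite (ae_eq_integral _ _ mD _ _ f_ae0) ?integral0 //; exact/measurable_EFinP.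
Qed.

Lemma le_weighted_integral (g h : T -> R) :
    measurable_fun D g -> measurable_fun D h ->
    (forall x, D x -> 0 <= h x) -> (forall x, D x -> h x <= g x) ->
  (\int[mu]_(x in D) (h x * f x)%:E <= \int[mu]_(x in D) (g x * f x)%:E)%E.
Proof.
move=> mg mh h_ge0 le_hg; apply: ge0_le_integral => //.
- by move=> x Dx; rewrite lee_fin mulr_ge0 ?h_ge0 ?f_ge0.
- exact/measurable_EFinP/measurable_funM.
- exact/measurable_EFinP/measurable_funM.
- by move=> x Dx; rewrite lee_fin ler_wpM2r ?f_ge0 ?le_hg.
Qed.

Lemma lt_weighted_integral (g h : T -> R) :
    measurable_fun D g -> measurable_fun D h ->
    (forall x, D x -> 0 <= h x) -> (forall x, D x -> h x < g x) ->
    (\int[mu]_(x in D) (f x)%:E != 0)%E ->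
    (\int[mu]_(x in D) (h x * f x)%:E)%E \is a fin_num ->
  (\int[mu]_(x in D) (h x * f x)%:E < \int[mu]_(x in D) (g x * f x)%:E)%E.
Proof.
move=> mg mh h_ge0 lt_hg f_neq0 hf_fin.
have mgh : measurable_fun D (g \- h) by exact: measurable_funB.
have gh_gt0 x : D x -> 0 < (g \- h) x by move=> Dx; rewrite subr_gt0 lt_hg.
have -> : (\int[mu]_(x in D) (g x * f x)%:E =
    \int[mu]_(x in D) (h x * f x)%:E + \int[mu]_(x in D) ((g \- h) x * f x)%:E)%E.
  rewrite -ge0_integralD //.
  - by apply: eq_integral => x _; rewrite -EFinD /= mulrBl addrC subrK.
  - by move=> x Dx; rewrite lee_fin mulr_ge0 ?h_ge0 ?f_ge0.
  - exact/measurable_EFinP/measurable_funM.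
  - by move=> x Dx; rewrite lee_fin (mulr_ge0 (ltW (gh_gt0 x Dx)) (f_ge0 Dx)).
  - exact/measurable_EFinP/measurable_funM.
rewrite lteDl // lt0e integral_ge0 ?andbT.
  by apply: contra f_neq0 => /eqP /(integral_pos_weight_eq0 mgh gh_gt0) ->.
by move=> x Dx; rewrite lee_fin (mulr_ge0 (ltW (gh_gt0 x Dx)) (f_ge0 Dx)).
Qed.

End weighted_integral.

Section average_likelihood.
Local Open Scope classical_set_scope.

Lemma measurable_pos_quadrant (R : realType) : measurable (pos_quadrant R).
Proof.
have -> : pos_quadrant R = `]0, +oo[ `*` `]0, +oo[.
  by apply/seteqP; split => x /=; rewrite !in_itv /= !andbT.
exact: measurableX.
Qed.

Variables (R : realType) (f : R * R -> R).
Hypothesis f_density : is_density f.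
Local Notation mu := ((@lebesgue_measure R) \x (@lebesgue_measure R))%E.
Let mD : measurable (pos_quadrant R). Proof. exact: measurable_pos_quadrant. Qed.
Let mlik K (s : codeword K) r :
  measurable_fun (pos_quadrant R) (fun x => lik x.1 x.2 s r).
Proof. exact: measurable_funTS (measurable_lik s r). Qed.
Let lik_ge0 K (s : codeword K) r x : pos_quadrant R x -> 0 <= lik x.1 x.2 s r.
Proof. by case=> x1_gt0 x2_gt0; apply/ltW/lik_gt0 => //; apply: ltW. Qed.

Lemma avg_lik_ge0 K (s : codeword K) r : (0 <= avg_lik f s r)%E.
Proof.
case: f_density => _ f_ge0 _; apply: integral_ge0 => x Dx.
by rewrite lee_fin mulr_ge0 ?f_ge0 ?lik_ge0.
Qed.

Lemma avg_lik_fin_num K (s : codeword K) r : avg_lik f s r \is a fin_num.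
Proof.
case: f_density => mf f_ge0 f_int1.
rewrite ge0_fin_numE ?avg_lik_ge0 //; apply: (@le_lt_trans _ _ 1%E); last exact: ltry.
have int_f1 : (\int[mu]_(x in pos_quadrant R) (cst 1 x * f x)%:E = 1)%E.
  by rewrite -f_int1; apply: eq_integral => x _; rewrite mul1r.
rewrite -int_f1.
apply: le_weighted_integral => //; [exact: mlik|exact: lik_ge0|].
by move=> x [x1_gt0 x2_gt0]; apply: lik_le1 (ltW x1_gt0) x2_gt0.
Qed.

Lemma le_avg_lik K (s s' : codeword K) r :
    (forall x, pos_quadrant R x -> lik x.1 x.2 s' r <= lik x.1 x.2 s r) ->
  (avg_lik f s' r <= avg_lik f s r)%E.
Proof.
case: f_density => mf f_ge0 _ le_lik.
by apply: le_weighted_integral => //; [exact: mlik|exact: mlik|exact: lik_ge0].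
Qed.

Lemma lt_avg_lik K (s s' : codeword K) r :
    (forall x, pos_quadrant R x -> lik x.1 x.2 s' r < lik x.1 x.2 s r) ->
  (avg_lik f s' r < avg_lik f s r)%E.
Proof.
case: f_density => mf f_ge0 f_int1 lt_lik.
apply: lt_weighted_integral => //; last exact: avg_lik_fin_num.
- exact: mlik.
- exact: mlik.
- exact: lik_ge0.
- by rewrite f_int1 oner_neq0.
Qed.

End average_likelihood.

Theorem corollary1 (R : realType) (K w : nat) (C : {set codeword K}) :
  C != finset.set0 -> is_CW_code w C ->
  forall (r : 'I_K -> nat) (cs cn : R), 0 < cs -> 0 < cn ->
  forall f : R * R -> R, is_density f ->
    argmax C (fun s => lik cs cn s r) = argmax C (fun s => corr R s r) /\
    argmax C (fun s => avg_lik f s r) = argmax C (fun s => corr R s r).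
Proof.
move=> _ CW r cs cn cs_gt0 cn_gt0 f f_density.
split; apply: argmax_homo => s s' sC s'C;
  have same_weight : #|[set k | s' k]| = #|[set k | s k]| by rewrite !CW.
- by rewrite ler_lik.
- by rewrite ltr_lik.
- by move=> le_corr; apply: le_avg_lik => // x [x1_gt0 x2_gt0]; rewrite ler_lik.
- by move=> lt_corr; apply: lt_avg_lik => // x [x1_gt0 x2_gt0]; rewrite ltr_lik.
Qed.
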